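(* Let $X$ be a partial design graph with parameters $(m,d,c_1,c_2)$, and let $Y$ be its $c_1$-graph. Then: (i) $Y$ is regular of degree $$d'=\frac{d(d-1)-(m-1)c_2}{c_1-c_2};$$ (ii) if $\alpha_1'=d',\alpha_2',\dots,\alpha_m'$ are the adjacency eigenvalues of $Y$ (with multiplicity), then the adjacency eigenvalues of $X$, with multiplicity, are $$\pm d,\qquad \pm\sqrt{(d-c_2)+(c_1-c_2)\alpha_k'}\quad (k=2,\dots,m).$$
   Context: A partial design graph is a finite, simple, connected, regular bipartite graph with $m$ vertices of each colour and degree $d$ such that the number of common neighbours of two distinct vertices of the same colour takes exactly two values $c_1\neq c_2$. Its $c_1$-graph is the (possibly disconnected) graph whose vertices are the $m$ vertices of one fixed colour (the black vertices), two of them being adjacent if and only if they have exactly $c_1$ common neighbours in $X$. Adjacency eigenvalues are eigenvalues of the adjacency matrix. *)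

From mathcomp Require Import all_boot all_order all_algebra all_field.
Set Implicit Arguments. Unset Strict Implicit. Unset Printing Implicit Defensive.
Import Order.TTheory GRing.Theory Num.Theory.
Local Open Scope ring_scope.

(* A bipartite graph with m black vertices ('I_m) and m white vertices ('I_m)
   is given by its incidence relation N : black -> white -> bool
   (N b w  <=>  black b is adjacent to white w). *)

Section PDG.
Variable m : nat.
Variable N : rel 'I_m.

(* Vertex set of X: black vertices (inl) and white vertices (inr). *)
Definition Xvert := ('I_m + 'I_m)%type.

Definition Xadj : rel Xvert := fun x y =>
  match x, y with
  | inl b, inr w => N b w
  | inr w, inl b => N b w
  | _, _ => false
  end.

Definition black_deg (b : 'I_m) : nat := #|[set w | N b w]|.
Definition white_deg (w : 'I_m) : nat := #|[set b | N b w]|.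

Definition cn_black (b b' : 'I_m) : nat := #|[set w | N b w && N b' w]|.
Definition cn_white (w w' : 'I_m) : nat := #|[set b | N b w && N b w']|.

Definition partial_design_graph (d c1 c2 : nat) : Prop :=
  [/\ (forall x y : Xvert, connect Xadj x y),
      (forall b, black_deg b = d) /\ (forall w, white_deg w = d),
      c1 <> c2,
      (forall b b', b != b' -> cn_black b b' = c1 \/ cn_black b b' = c2) /\
      (forall w w', w != w' -> cn_white w w' = c1 \/ cn_white w w' = c2)
    &
      (forall c, c = c1 \/ c = c2 ->
        (exists b b', b != b' /\ cn_black b b' = c) \/
        (exists w w', w != w' /\ cn_white w w' = c))].

Definition Yadj (c1 : nat) : rel 'I_m := fun b b' =>
  (b != b') && (cn_black b b' == c1).

Definition adjY (c1 : nat) : 'M[algC]_m :=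
  \matrix_(i, j) ((Yadj c1 i j)%:R).

Definition adjX : 'M[algC]_(m + m) :=
  \matrix_(i, j) ((Xadj (split i) (split j))%:R).

End PDG.

From mathcomp Require Import all_boot all_order all_algebra all_field.
From mathcomp Require Import ring.
Import Order.TTheory GRing.Theory Num.Theory.
Local Open Scope ring_scope.

(* With N the black-white incidence matrix, N N^T counts common neighbours, so
   N N^T = (d - c2) I + (c1 - c2) A_Y + c2 J.  Comparing row sums (N N^T has
   constant row sum d^2) gives the degree d' of Y.  The all-ones vector is an
   eigenvector of A_Y and of J, and conjugating it to the first basis vector
   shows that the other eigenvalues of N N^T are (d - c2) + (c1 - c2) a_k.
   Finally adjX = [[0, N], [N^T, 0]] has characteristic polynomial
   char_poly (N N^T) (X^2), so each eigenvalue l of N N^T gives +-sqrt l. *)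

Lemma char_poly_conj {R : comNzRingType} {n} (A : 'M[R]_n) {P Q : 'M[R]_n} :
  Q *m P = 1%:M -> char_poly (Q *m A *m P) = char_poly A.
Proof.
move=> QP; rewrite /char_poly; pose pC := map_mx (@polyC R).
have pQP : pC _ _ Q *m pC _ _ P = 1%:M by rewrite -map_mxM QP map_mx1.
have -> : char_poly_mx (Q *m A *m P) = pC _ _ Q *m char_poly_mx A *m pC _ _ P.
  rewrite /char_poly_mx mulmxBr mulmxBl mul_mx_scalar -scalemxAl -!map_mxM QP.
  by rewrite map_mx1 scalemx1.
by rewrite !det_mulmx mulrAC -det_mulmx pQP det1 mul1r.
Qed.

Lemma char_poly_col0 {R : comNzRingType} n (Z : 'M[R]_n.+1) k :
  (forall i, Z i 0 = (i == 0)%:R * k) ->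
  char_poly Z = ('X - k%:P) * char_poly (row' 0 (col' 0 Z)).
Proof.
move=> Z0; rewrite /char_poly (expand_det_col _ 0) (bigD1 0) //= big1 ?addr0.
  by rewrite /cofactor row'_col'_char_poly_mx !mxE eqxx Z0 mul1r expr0 mul1r.
by move=> i /negPf i0; rewrite !mxE Z0 i0 mul0r mulr0n sub0r oppr0 mul0r.
Qed.

Lemma mulmx_const_ones {R : comNzRingType} n (c : R) :
  (const_mx c : 'M_n) *m (const_mx 1 : 'cV_n) = (c *+ n) *: const_mx 1.
Proof.
apply/matrixP => i j; rewrite !mxE mulr1 (eq_bigr (fun=> c)) => [|k _].
  by rewrite sumr_const card_ord.
by rewrite !mxE mulr1.
Qed.

Section Deflation.
Context {R : comNzRingType} {n : nat}.
Local Notation ones := (const_mx 1 : 'cV[R]_n.+1).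

Definition shear : 'M[R]_n.+1 := \matrix_(i, j) ((j == 0) && (i != 0))%:R.

(* [1 + shear] has the all-ones vector as column 0 and inverse [1 - shear], so
   conjugating by it turns [ones] into the first basis vector. *)
Definition deflate (B : 'M[R]_n.+1) : 'M[R]_n :=
  row' 0 (col' 0 ((1%:M - shear) *m B *m (1%:M + shear))).

Lemma shear_sqr : shear *m shear = 0.
Proof.
apply/matrixP => i j; rewrite !mxE big1 // => k _; rewrite !mxE.
by case: (k == 0); rewrite /= ?andbF ?mul0r ?mulr0.
Qed.

Lemma shear_inv : (1%:M - shear) *m (1%:M + shear) = 1%:M.
Proof. by rewrite mulmxBl mul1mx mulmxDr mulmx1 shear_sqr addr0 addrK. Qed.

Lemma mulmx_shear_col0 (B : 'M[R]_n.+1) i :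
  (B *m (1%:M + shear)) i 0 = (B *m ones) i 0.
Proof.
rewrite !mxE; apply: eq_bigr => j _; rewrite !mxE.
by case: (j =P 0) => [->|]; rewrite ?addr0 ?add0r.
Qed.

Lemma shear_ones : (1%:M - shear) *m ones = delta_mx 0 0.
Proof.
apply/matrixP => i j; rewrite (ord1 j) mulmxBl mul1mx !mxE.
rewrite (bigD1 0) //= big1 ?addr0 => [|k /negPf k0]; last first.
  by rewrite !mxE k0 mul0r.
by rewrite !mxE eqxx mulr1; case: (i == 0); rewrite ?subrr ?subr0.
Qed.

Lemma char_poly_deflate {B : 'M[R]_n.+1} {l : R} : B *m ones = l *: ones ->
  char_poly B = ('X - l%:P) * char_poly (deflate B).
Proof.
move=> Bl; rewrite -(char_poly_conj B shear_inv); apply: char_poly_col0 => i.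
rewrite mulmx_shear_col0 -mulmxA Bl -scalemxAr shear_ones !mxE eqxx andbT.
by rewrite mulrC.
Qed.

Lemma deflate_affine (A : 'M[R]_n.+1) a b c :
  deflate (a%:M + b *: A + const_mx c) = a%:M + b *: deflate A.
Proof.
have J1 : const_mx c = c *: (ones *m ones^T).
  by apply/matrixP => i j; rewrite !mxE big_ord1 !mxE !mulr1.
rewrite /deflate J1; move: shear_inv shear_ones.
move: (1%:M - shear) (1%:M + shear) => Q P QP Q1.
rewrite !mulmxDr !mulmxDl mul_mx_scalar -!scalemxAr -!scalemxAl QP scalemx1.
rewrite [Q *m (ones *m _)]mulmxA Q1 -mulmxA !linearD !linearZ /=.
have -> : row' 0 (col' 0 (delta_mx 0 0 *m (ones^T *m P))) = 0 :> 'M_n.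
  by apply/matrixP => i j; rewrite !mxE big_ord1 !mxE mul0r.
rewrite scaler0 addr0; congr (_ + _).
by apply/matrixP => i j; rewrite !mxE (inj_eq lift_inj).
Qed.

End Deflation.

Lemma char_poly_affine {F : fieldType} {n} {D : 'M[F]_n} (a : F) {b : F}
    {s : seq F} :
  b != 0 -> char_poly D = \prod_(x <- s) ('X - x%:P) ->
  char_poly (a%:M + b *: D) = \prod_(x <- s) ('X - (a + b * x)%:P).
Proof.
move=> b0 cD; pose q := b^-1 *: ('X - a%:P).
have [sz] : (size s).+1 = n.+1.
  by rewrite -(size_char_poly D) cD size_prod_XsubC.
have bq x : b%:P * (q - x%:P) = 'X - (a + b * x)%:P.
  rewrite /q -mul_polyC mulrBr mulrA -polyCM mulfV // mul1r.
  by rewrite polyCD polyCM opprD addrA.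
rewrite /char_poly.
have -> : char_poly_mx (a%:M + b *: D) =
    b%:P *: map_mx (comp_poly q) (char_poly_mx D).
  apply/matrixP => i j; rewrite !mxE; case: (i == j).
    by rewrite !mulr1n rmorphB /= comp_polyX comp_polyC bq.
  by rewrite !mulr0n !sub0r add0r rmorphN /= comp_polyC polyCM mulrN.
rewrite detZ det_map_mx -/(char_poly D) cD rmorph_prod -sz.
elim: s {cD sz} => [|x s IH]; first by rewrite !big_nil expr0 mulr1.
by rewrite !big_cons exprS -IH mulrACA rmorphB /= comp_polyX comp_polyC bq.
Qed.

Section RankOnePerturbation.
Context {F : fieldType} {n : nat}.
Local Notation ones := (const_mx 1 : 'cV[F]_n.+1).

Lemma char_poly_affine_ones {A : 'M[F]_n.+1} {a b c k : F} {s : seq F} :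
  b != 0 -> A *m ones = k *: ones ->
  char_poly A = ('X - k%:P) * \prod_(x <- s) ('X - x%:P) ->
  char_poly (a%:M + b *: A + const_mx c) =
    ('X - (a + b * k + c *+ n.+1)%:P) * \prod_(x <- s) ('X - (a + b * x)%:P).
Proof.
move=> b0 Ak cA.
have Bones : (a%:M + b *: A + const_mx c) *m ones =
    (a + b * k + c *+ n.+1) *: ones.
  rewrite !mulmxDl mul_scalar_mx -scalemxAl Ak mulmx_const_ones scalerA.
  by rewrite !scalerDl.
have cD : char_poly (deflate A) = \prod_(x <- s) ('X - x%:P).
  apply: (@mulfI _ ('X - k%:P)); first by rewrite polyXsubC_eq0.
  by rewrite -(char_poly_deflate Ak) cA.
by rewrite (char_poly_deflate Bones) deflate_affine (char_poly_affine a b0 cD).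
Qed.

End RankOnePerturbation.

Lemma char_poly_block_anti {R : idomainType} n (B C : 'M[R]_n) :
  char_poly (block_mx 0 B C 0) = char_poly (B *m C) \Po 'X^2.
Proof.
rewrite /char_poly; pose pC := map_mx (@polyC R).
have -> : char_poly_mx (block_mx 0 B C 0) =
    block_mx 'X%:M (- pC _ _ B) (- pC _ _ C) 'X%:M.
  rewrite /char_poly_mx map_block_mx !map_mx0 (scalar_mx_block n n).
  by rewrite opp_block_mx add_block_mx !oppr0 !addr0 !add0r.
(* Right multiplication by [K] makes the matrix block upper triangular, with
   diagonal blocks [X^2 - B C] and [X^2]. *)
set K := block_mx 'X%:M 0 (pC _ _ C) 'X%:M.
have detK := det_lblock ('X%:M : 'M_n) (pC _ _ C) ('X%:M : 'M_n).
apply: (@mulIf _ (\det K)).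
  by rewrite /K detK det_scalar mulf_neq0 // expf_neq0 // polyX_eq0.
rewrite -det_mulmx.
have -> : block_mx 'X%:M (- pC _ _ B) (- pC _ _ C) 'X%:M *m K =
    block_mx ('X^2%:M - pC _ _ (B *m C)) (- ('X *: pC _ _ B)) 0 'X^2%:M.
  rewrite mulmx_block !mulmx0 !add0r !mulNmx -scalar_mxM -expr2.
  by rewrite !mul_mx_scalar mul_scalar_mx addNr /pC map_mxM.
rewrite det_ublock /K detK !det_scalar -exprMn -expr2 -exprM mulnC exprM.
congr (_ * _).
rewrite -det_map_mx; congr (\det _).
apply/matrixP => i j.
by rewrite !mxE rmorphB /= comp_polyC rmorphMn /= comp_polyX.
Qed.

Lemma comp_XsubC_sqr {R : comNzRingType} (r : R) :
  ('X - (r ^+ 2)%:P) \Po 'X^2 = ('X - r%:P) * ('X + r%:P).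
Proof. by rewrite rmorphB /= comp_polyX comp_polyC rmorphXn subr_sqr. Qed.

Lemma sum_indicator {R : nzSemiRingType} (T : finType) (P : pred T) :
  \sum_j ((P j)%:R : R) = #|[set j | P j]|%:R.
Proof.
rewrite -sum1_card natr_sum [RHS]big_mkcond /=; apply: eq_bigr => j _.
by rewrite inE; case: (P j).
Qed.

Lemma mulmx_rel_ones {R : comNzRingType} n (r : rel 'I_n) i :
  ((\matrix_(i, j) (r i j)%:R : 'M[R]_n) *m (const_mx 1 : 'cV_n)) i 0 =
    #|[set j | r i j]|%:R.
Proof.
by rewrite !mxE -sum_indicator; apply: eq_bigr => j _; rewrite !mxE mulr1.
Qed.

Definition c1_degree (m d c1 c2 : nat) : algC :=
  ((d * (d - 1))%:R - (m - 1)%:R * c2%:R) / (c1%:R - c2%:R).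

Lemma c1_degree_rowsum {m d c1 c2 : nat} : c1 != c2 -> (0 < m)%N ->
  (d%:R - c2%:R) + (c1%:R - c2%:R) * c1_degree m d c1 c2 + c2%:R *+ m =
    d%:R * d%:R :> algC.
Proof.
move=> c12 m0; rewrite /c1_degree mulrC divfK ?subr_eq0 ?eqr_nat //.
have -> : (d * (d - 1))%:R = d%:R * (d%:R - 1) :> algC.
  by case: d => [|d']; rewrite ?mul0r // natrM subn1 -natr1 addrK.
by rewrite natrB // -mulr_natr; ring.
Qed.

Section PartialDesignGraph.
Context {m : nat} {N : rel 'I_m} {d c1 c2 : nat}.
Local Notation ones := (const_mx 1 : 'cV[algC]_m).

Definition incmx : 'M[algC]_m := \matrix_(i, j) (N i j)%:R.

Lemma adjX_block : adjX N = block_mx 0 incmx incmx^T 0.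
Proof.
apply/matrixP => i j; rewrite !mxE.
by case: (split i) => i'; rewrite !mxE; case: (split j) => j'; rewrite !mxE.
Qed.

Lemma gram_incmx : incmx *m incmx^T = \matrix_(i, j) (cn_black N i j)%:R.
Proof.
apply/matrixP => i j; rewrite !mxE -sum_indicator; apply: eq_bigr => k _.
by rewrite !mxE -natrM mulnb.
Qed.

Hypothesis pdg : partial_design_graph N d c1 c2.

Lemma incmx_ones : incmx *m ones = d%:R *: ones.
Proof.
case: pdg => _ [black _] _ _ _; apply/matrixP => i j; rewrite (ord1 j).
by rewrite mulmx_rel_ones !mxE mulr1 -(black i).
Qed.

Lemma trmx_incmx_ones : incmx^T *m ones = d%:R *: ones.
Proof.
case: pdg => _ [_ white] _ _ _; apply/matrixP => i j; rewrite (ord1 j).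
have -> : incmx^T = \matrix_(w, b) (N b w)%:R.
  by apply/matrixP => w b; rewrite !mxE.
by rewrite mulmx_rel_ones !mxE mulr1 -(white i).
Qed.

Lemma gram_incmxE : incmx *m incmx^T =
  (d%:R - c2%:R)%:M + (c1%:R - c2%:R) *: adjY N c1 + const_mx c2%:R.
Proof.
case: pdg => _ [black _] c12 [cn _] _; rewrite gram_incmx.
apply/matrixP => i j; rewrite !mxE /Yadj; case: (eqVneq i j) => [<-|ij] /=.
  have -> : cn_black N i i = d.
    by rewrite -(black i); apply: eq_card => w; rewrite !inE andbb.
  by rewrite mulr0 addr0 mulr1n subrK.
rewrite mulr0n add0r; case: (cn i j ij) => ->.
  by rewrite eqxx mulr1 subrK.
suff /negPf-> : c2 != c1 by rewrite mulr0 add0r.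
by apply/eqP => /esym.
Qed.

Lemma pdg_gt0 : (0 < m)%N.
Proof.
case: pdg => _ _ _ _ /(_ c1 (or_introl erefl)).
by case: m N => [|//] ? [[[] []]|[[] []]].
Qed.

Lemma adjY_regular : adjY N c1 *m ones = c1_degree m d c1 c2 *: ones.
Proof.
have [_ _ /eqP c12 _ _] := pdg; have := c1_degree_rowsum (d := d) c12 pdg_gt0.
set a : algC := d%:R - c2%:R; set b : algC := c1%:R - c2%:R.
set c : algC := c2%:R *+ m => rowsum.
have b0 : b != 0 by rewrite subr_eq0 eqr_nat.
have : (a%:M + b *: adjY N c1 + const_mx c2%:R) *m ones =
    (a + b * c1_degree m d c1 c2 + c) *: ones.
  rewrite rowsum -gram_incmxE -mulmxA trmx_incmx_ones -scalemxAr incmx_ones.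
  by rewrite scalerA.
rewrite !mulmxDl mul_scalar_mx -scalemxAl mulmx_const_ones -/c.
clearbody a b c.
by rewrite addrAC [in RHS]addrAC !scalerDl -scalerA => /addrI /(scalerI b0).
Qed.

Lemma c1_graph_regular b :
  #|[set b' | Yadj N c1 b b']|%:R = c1_degree m d c1 c2.
Proof.
have := congr1 (fun v : 'cV[algC]_m => v b 0) adjY_regular.
by rewrite /adjY mulmx_rel_ones !mxE mulr1.
Qed.

End PartialDesignGraph.

Theorem mainTheorem17 (m : nat) (N : rel 'I_m) (d c1 c2 : nat) :
  partial_design_graph N d c1 c2 ->
  let d' : algC := ((d * (d - 1))%:R - (m - 1)%:R * c2%:R) / (c1%:R - c2%:R) in
  (* (i) Y is regular of degree d' *)
  (forall b : 'I_m, (#|[set b' | Yadj N c1 b b']|)%:R = d') /\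
  (* (ii) eigenvalues with multiplicity *)
  (forall alpha : seq algC,
     size alpha = m ->
     char_poly (adjY N c1) = \prod_(a <- alpha) ('X - a%:P) ->
     alpha`_0 = d' ->
     char_poly (adjX N) =
       ('X - d%:R%:P) * ('X + d%:R%:P) *
       \prod_(a <- behead alpha)
          (('X - (sqrtC ((d%:R - c2%:R) + (c1%:R - c2%:R) * a))%:P) *
           ('X + (sqrtC ((d%:R - c2%:R) + (c1%:R - c2%:R) * a))%:P))).
Proof.
case: m N => [|n] N pdg; first by have := pdg_gt0 pdg.
split=> [|[//|k s] _ /= cY k_eq]; first exact: c1_graph_regular.
have [_ _ /eqP c12 _ _] := pdg.
have b0 : (c1%:R - c2%:R : algC) != 0 by rewrite subr_eq0 eqr_nat.
rewrite big_cons k_eq in cY.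
rewrite adjX_block char_poly_block_anti (gram_incmxE pdg).
rewrite (char_poly_affine_ones b0 (adjY_regular pdg) cY).
rewrite c1_degree_rowsum // rmorphM rmorph_prod /=.
congr (_ * _); first by rewrite -expr2 comp_XsubC_sqr.
by apply: eq_bigr => x _; rewrite -{1}[_ + _ * x]sqrtCK comp_XsubC_sqr.
Qed.
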